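(* Let $X$ be a geodesic space with $r(X)>0$, let $\varepsilon>0$, $0<q\le r(X)/2$, and let $A\subset X$ with $\operatorname{Diam}(A)\le q-2\varepsilon$. Then there exists an open geodesically convex subset $A_\infty\subset X$ containing $A$ with $\operatorname{Diam}(A_\infty)\le q-\varepsilon$.
   Context: A metric space is geodesic if any two points $x,y$ are joined by a path of length $d(x,y)$ (a geodesic; here a geodesic is the image of an isometric embedding of a closed interval). For a geodesic space $X$, $r(X)\ge0$ is the supremum of the real numbers $r$ satisfying: (1) for all $x,y\in X$ with $d(x,y)<2r$ there is a unique shortest geodesic from $x$ to $y$; (2) if $x,y,u\in X$ with $d(x,y)<r$, $d(u,x)<r$, $d(u,y)<r$ and $z$ is a point on the geodesic joining $x$ and $y$, then $d(u,z)\le\max\{d(u,x),d(u,y)\}$; (3) if $\gamma,\gamma'$ are arc-length parameterized geodesics with $\gamma(0)=\gamma'(0)$ and $0\le s,s'<r$, $0\le t<1$, then $d(\gamma(ts),\gamma'(ts'))\le d(\gamma(s),\gamma'(s'))$. A subset $A$ of a ball $B(x_0,r(X))$ is geodesically convex if every (unique shortest) geodesic connecting two points of $A$ lies entirely in $A$. *)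

From Stdlib Require Export Reals.
Open Scope R_scope.

Definition is_metric {X : Type} (d : X -> X -> R) : Prop :=
  (forall x y, 0 <= d x y) /\
  (forall x y, d x y = 0 <-> x = y) /\
  (forall x y, d x y = d y x) /\
  (forall x y z, d x z <= d x y + d y z).

Definition is_geodesic {X : Type} (d : X -> X -> R) (x y : X) (G : X -> Prop) : Prop :=
  exists g : R -> X,
    g 0 = x /\ g (d x y) = y /\
    (forall s t, 0 <= s <= d x y -> 0 <= t <= d x y -> d (g s) (g t) = Rabs (s - t)) /\
    (forall z, G z <-> exists t, 0 <= t <= d x y /\ g t = z).

Definition geodesic_space {X : Type} (d : X -> X -> R) : Prop :=
  is_metric d /\ forall x y : X, exists G, is_geodesic d x y G.

Definition arclength_geodesic {X : Type} (d : X -> X -> R) (g : R -> X) (L : R) : Prop :=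
  0 <= L /\
  forall s t, 0 <= s <= L -> 0 <= t <= L -> d (g s) (g t) = Rabs (s - t).

Definition rX_conditions {X : Type} (d : X -> X -> R) (r : R) : Prop :=
  (forall x y, d x y < 2 * r ->
     exists G, is_geodesic d x y G /\
       forall G', is_geodesic d x y G' -> forall z, G' z <-> G z) /\
  (forall x y u G z, d x y < r -> d u x < r -> d u y < r ->
     is_geodesic d x y G -> G z -> d u z <= Rmax (d u x) (d u y)) /\
  (forall (g g' : R -> X) L L' s s' t,
     arclength_geodesic d g L -> arclength_geodesic d g' L' -> g 0 = g' 0 ->
     0 <= s < r -> s <= L -> 0 <= s' < r -> s' <= L' -> 0 <= t < 1 ->
     d (g (t * s)) (g' (t * s')) <= d (g s) (g' s')).

(* The set whose supremum is r(X). *)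
Definition rX_set {X : Type} (d : X -> X -> R) (r : R) : Prop :=
  0 <= r /\ rX_conditions d r.

Definition rX_pos {X : Type} (d : X -> X -> R) : Prop :=
  exists r, 0 < r /\ rX_set d r.

(* c <= r(X), with r(X) = sup rX_set in the extended reals
   (if rX_set is unbounded, r(X) = +infinity and this holds). *)
Definition rX_ge {X : Type} (d : X -> X -> R) (c : R) : Prop :=
  forall l, is_lub (rX_set d) l -> c <= l.

Definition diam_le {X : Type} (d : X -> X -> R) (A : X -> Prop) (c : R) : Prop :=
  forall x y, A x -> A y -> d x y <= c.

Definition is_open {X : Type} (d : X -> X -> R) (A : X -> Prop) : Prop :=
  forall x, A x -> exists e, 0 < e /\ forall y, d x y < e -> A y.

Definition geodesically_convex {X : Type} (d : X -> X -> R) (A : X -> Prop) : Prop :=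
  forall x y G, A x -> A y -> is_geodesic d x y G -> forall z, G z -> A z.

From Stdlib Require Import Reals Lra Lia Classical.
Open Scope R_scope.

(* Fix r with q < r such that conditions (1)-(3) of r(X) hold for r (this is
   possible because r(X) >= 2q > q).  Condition (2) says that a geodesic
   between two points of a set of diameter D < r stays within distance D of
   every point of the set; hence the geodesic hull J(S) (the union of all
   geodesics between points of S) has the same diameter bound as S.
   Starting from A_0 = A, put A_{n+1} = N_{delta_n}(J(A_n)), the open
   delta_n-neighbourhood of the hull, with delta_n = eps / 2^(n+2).  Each
   step adds at most 2 delta_n = eps / 2^(n+1) to the diameter, so
   Diam(A_n) <= q - eps - eps / 2^n < r for all n.  The union
   A_inf = U_n A_{n+1} is open (a union of open neighbourhoods), convex
   (the chain is increasing and a geodesic between points of A_n lies in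
   J(A_n), which is contained in A_{n+1}), contains A, and has diameter at
   most q - eps. *)

Definition geodesic_hull {X : Type} (d : X -> X -> R) (S : X -> Prop) (z : X) : Prop :=
  exists x y G, S x /\ S y /\ is_geodesic d x y G /\ G z.

Definition nbhd {X : Type} (d : X -> X -> R) (delta : R) (S : X -> Prop) (x : X) : Prop :=
  exists y, S y /\ d x y < delta.

Fixpoint hull_chain {X : Type} (d : X -> X -> R) (delta : nat -> R) (A : X -> Prop)
  (n : nat) : X -> Prop :=
  match n with
  | O => A
  | S m => nbhd d (delta m) (geodesic_hull d (hull_chain d delta A m))
  end.

(* The union of the chain from index 1 on, where every member is open. *)
Definition hull_chain_union {X : Type} (d : X -> X -> R) (delta : nat -> R)
  (A : X -> Prop) (x : X) : Prop :=
  exists n, hull_chain d delta A (S n) x.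

(* Since r(X) is a supremum, below any lower bound c of r(X) there are
   admissible radii r; this is where r(X) > 0 ensures the set is nonempty. *)
Lemma admissible_radius_above {X : Type} (d : X -> X -> R) (c c' : R) :
  rX_pos d -> rX_ge d c -> c' < c -> exists r, c' < r /\ rX_conditions d r.
Proof.
  intros [r0 [_ Hr0]] Hc Hc'.
  apply NNPP; intros Hno.
  assert (Hub : is_upper_bound (rX_set d) c').
  { intros r Hr. destruct (Rle_dec r c') as [Hle|Hgt]; [exact Hle|].
    exfalso; apply Hno; exists r; split; [lra | exact (proj2 Hr)]. }
  destruct (completeness (rX_set d)) as [l Hl].
  - exists c'; exact Hub.
  - exists r0; exact Hr0.
  - pose proof (Hc l Hl). pose proof (proj2 Hl c' Hub). lra.
Qed.

Section HullAndNeighbourhood.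

Variable X : Type.
Variable d : X -> X -> R.
Hypothesis metric_d : is_metric d.

Let d_nonneg : forall x y, 0 <= d x y := proj1 metric_d.
Let d_refl : forall x, d x x = 0 := fun x => proj2 (proj1 (proj2 metric_d) x x) eq_refl.
Let d_sym : forall x y, d x y = d y x := proj1 (proj2 (proj2 metric_d)).
Let d_triangle : forall x y z, d x z <= d x y + d y z := proj2 (proj2 (proj2 metric_d)).

Lemma geodesic_contains_start (x y : X) (G : X -> Prop) :
  is_geodesic d x y G -> G x.
Proof.
  intros [g [Hg0 [_ [_ HG]]]]. apply HG. exists 0.
  split; [pose proof (d_nonneg x y); lra | exact Hg0].
Qed.

(* In a geodesic space every set is contained in its geodesic hull
   (use the geodesic from x to itself). *)
Lemma subset_geodesic_hull (S : X -> Prop) (x : X) :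
  (forall x y : X, exists G, is_geodesic d x y G) -> S x -> geodesic_hull d S x.
Proof.
  intros Hgeo Hx. destruct (Hgeo x x) as [G HG].
  exists x, x, G. repeat split; auto. exact (geodesic_contains_start x x G HG).
Qed.

(* Apply (2) once to bound the distance from points of S to the hull,
   then once more to bound distances within the hull. *)
Lemma geodesic_hull_diam (S : X -> Prop) (D r : R) :
  rX_conditions d r -> D < r -> diam_le d S D -> diam_le d (geodesic_hull d S) D.
Proof.
  intros [_ [Hcond2 _]] HDr HS z z'
    [x [y [G [Sx [Sy [HG Gz]]]]]] [x' [y' [G' [Sx' [Sy' [HG' Gz']]]]]].
  assert (Hclose : forall u, S u -> d u z <= D).
  { intros u Su.
    pose proof (HS x y Sx Sy). pose proof (HS u x Su Sx). pose proof (HS u y Su Sy).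
    eapply Rle_trans; [apply (Hcond2 x y u G z); auto; lra |].
    apply Rmax_lub; assumption. }
  pose proof (HS x' y' Sx' Sy'). pose proof (Hclose x' Sx'). pose proof (Hclose y' Sy').
  rewrite !(d_sym _ z) in *.
  eapply Rle_trans; [apply (Hcond2 x' y' z G' z'); auto; lra |].
  apply Rmax_lub; assumption.
Qed.

Lemma subset_nbhd (S : X -> Prop) (delta : R) (x : X) :
  0 < delta -> S x -> nbhd d delta S x.
Proof. intros Hdelta Hx. exists x. rewrite d_refl. auto. Qed.

Lemma nbhd_open (S : X -> Prop) (delta : R) : is_open d (nbhd d delta S).
Proof.
  intros x [y [Sy Hxy]]. exists (delta - d x y). split; [lra|].
  intros z Hxz. exists y. split; [exact Sy|].
  pose proof (d_triangle z x y). rewrite (d_sym z x) in *. lra.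
Qed.

Lemma nbhd_diam (S : X -> Prop) (delta D : R) :
  diam_le d S D -> diam_le d (nbhd d delta S) (D + 2 * delta).
Proof.
  intros HS x x' [y [Sy Hxy]] [y' [Sy' Hxy']].
  pose proof (HS y y' Sy Sy').
  pose proof (d_triangle x y x'). pose proof (d_triangle y y' x').
  rewrite (d_sym x' y') in Hxy'. lra.
Qed.

Variable delta : nat -> R.
Hypothesis delta_pos : forall n, 0 < delta n.
Hypothesis geodesic_d : forall x y : X, exists G, is_geodesic d x y G.

Lemma hull_chain_mono (A : X -> Prop) (n m : nat) (x : X) :
  (n <= m)%nat -> hull_chain d delta A n x -> hull_chain d delta A m x.
Proof.
  intros Hnm. induction Hnm as [|m _ IH]; [tauto|].
  intros Hx. apply subset_nbhd; [apply delta_pos|].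
  apply subset_geodesic_hull; [exact geodesic_d | exact (IH Hx)].
Qed.

Lemma hull_chain_union_open (A : X -> Prop) : is_open d (hull_chain_union d delta A).
Proof.
  intros x [n Hx]. destruct (nbhd_open _ _ x Hx) as [e [He Hball]].
  exists e. split; [exact He|]. intros y Hy. exists n. exact (Hball y Hy).
Qed.

(* The union of the chain is geodesically convex: both endpoints lie in a
   common A_{k}, and the geodesic lies in J(A_k), hence in A_{k+1}. *)
Lemma hull_chain_union_convex (A : X -> Prop) :
  geodesically_convex d (hull_chain_union d delta A).
Proof.
  intros x y G [n Hx] [m Hy] HG z Gz.
  exists (S (max n m)). apply subset_nbhd; [apply delta_pos|].
  change (geodesic_hull d (hull_chain d delta A (S (max n m))) z).
  exists x, y, G. repeat split; auto.
  - apply (hull_chain_mono A (S n)); [lia | exact Hx].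
  - apply (hull_chain_mono A (S m)); [lia | exact Hy].
Qed.

Lemma hull_chain_union_contains (A : X -> Prop) (x : X) :
  A x -> hull_chain_union d delta A x.
Proof. intros Hx. exists O. apply (hull_chain_mono A O); [lia | exact Hx]. Qed.

Lemma hull_chain_union_diam (A : X -> Prop) (c : R) :
  (forall n, diam_le d (hull_chain d delta A n) c) ->
  diam_le d (hull_chain_union d delta A) c.
Proof.
  intros Hc x y [n Hx] [m Hy]. apply (Hc (S (max n m))).
  - apply (hull_chain_mono A (S n)); [lia | exact Hx].
  - apply (hull_chain_mono A (S m)); [lia | exact Hy].
Qed.

End HullAndNeighbourhood.

(* With delta_n = eps / 2^(n+2) the diameters stay below q - eps - eps / 2^n:
   the hull step keeps the bound (it is < q < r), the neighbourhood step adds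
   2 delta_n = eps / 2^(n+1), which halves the remaining gap eps / 2^n. *)
Lemma hull_chain_diam {X : Type} (d : X -> X -> R) (A : X -> Prop) (eps q r : R) :
  is_metric d -> rX_conditions d r -> q < r -> 0 < eps ->
  diam_le d A (q - 2 * eps) ->
  forall n, diam_le d (hull_chain d (fun k => eps * (/2) ^ (k + 2)) A n)
                      (q - eps - eps * (/2) ^ n).
Proof.
  intros Hm Hr Hqr Heps HA n.
  induction n as [|n IH]; simpl hull_chain.
  - intros x y Hx Hy. pose proof (HA x y Hx Hy). simpl. lra.
  - assert (Hgap : 0 < eps * (/2) ^ n) by (apply Rmult_lt_0_compat; [lra | apply pow_lt; lra]).
    assert (Hstep : eps * (/2) ^ (n + 2) = eps * (/2) ^ n / 4)
      by (rewrite pow_add; simpl; field).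
    assert (Hnext : eps * (/2) ^ S n = eps * (/2) ^ n / 2) by (simpl; field).
    rewrite Hnext.
    replace (q - eps - eps * (/2) ^ n / 2)
      with (q - eps - eps * (/2) ^ n + 2 * (eps * (/2) ^ (n + 2))) by (rewrite Hstep; field).
    apply nbhd_diam; [exact Hm|].
    apply (geodesic_hull_diam X d Hm _ _ r Hr); [lra | exact IH].
Qed.

Theorem mainTheorem4 (X : Type) (d : X -> X -> R) (hX : geodesic_space d)
  (hr : rX_pos d) (eps q : R) (heps : 0 < eps) (hq0 : 0 < q)
  (hq : rX_ge d (2 * q)) (A : X -> Prop) (hA : diam_le d A (q - 2 * eps)) :
  exists Ainf : X -> Prop,
    is_open d Ainf /\ geodesically_convex d Ainf /\
    (forall x, A x -> Ainf x) /\ diam_le d Ainf (q - eps).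
Proof.
  destruct hX as [Hm Hgeo].
  destruct (admissible_radius_above d (2 * q) q hr hq) as [r [Hqr Hr]]; [lra|].
  set (delta := fun k : nat => eps * (/2) ^ (k + 2)).
  assert (Hdelta : forall k, 0 < delta k)
    by (intro k; apply Rmult_lt_0_compat; [lra | apply pow_lt; lra]).
  exists (hull_chain_union d delta A).
  split; [|split; [|split]].
  - exact (hull_chain_union_open X d Hm delta A).
  - exact (hull_chain_union_convex X d Hm delta Hdelta Hgeo A).
  - exact (hull_chain_union_contains X d Hm delta Hdelta Hgeo A).
  - apply (hull_chain_union_diam X d Hm delta Hdelta Hgeo).
    intros n x y Hx Hy.
    pose proof (hull_chain_diam d A eps q r Hm Hr Hqr heps hA n x y Hx Hy).
    assert (0 < eps * (/2) ^ n) by (apply Rmult_lt_0_compat; [lra | apply pow_lt; lra]).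
    lra.
Qed.
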